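(* Consider the system $S'=1-IS-S$, $I'=IS-I$ on $\mathbb R^2$. For $c\in[0,1)$ let $\Gamma_c=\{(S,I)\in\mathbb R^2: S\ge0,\ I\ge0,\ S+I\le1-c\}$. Then for every $c\in(0,1)$ the system has the conditional Lipschitz shadowing property in $\Gamma_c$, but it does not have the conditional Lipschitz shadowing property in $\Gamma_0$.
   Context: For continuous $g\colon[0,\infty)\times\mathbb R^n\to\mathbb R^n$ and $\tau\in(0,\infty]$, a pseudosolution of $x'=g(t,x)$ on $[0,\tau)$ is a $C^1$ map $y\colon[0,\tau)\to\mathbb R^n$ with $\sigma_y:=\sup_{0\le t<\tau}|y'(t)-g(t,y(t))|<\infty$ (for a fixed norm $|\cdot|$ on $\mathbb R^n$; the property below does not depend on the norm). The equation has the conditional Lipschitz shadowing property in $H\neq\emptyset$ if there exist $\varepsilon_0,\kappa>0$ such that whenever $0<\varepsilon\le\varepsilon_0$ and $y$ is a pseudosolution on $[0,\tau)$ ($\tau\in(0,\infty]$) with $\sigma_y\le\varepsilon$ and $y(t)\in H$ for all $t\in[0,\tau)$, there is a solution $x$ of the equation defined on $[0,\tau)$ with $\sup_{0\le t<\tau}|x(t)-y(t)|\le\kappa\varepsilon$. *)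

From Stdlib Require Import Reals Lra.
Open Scope R_scope.

(* Time horizon tau in (0, +oo]: [Some T] is a finite T, [None] is +oo. *)
Definition horizon_pos (tau : option R) : Prop :=
  match tau with Some T => 0 < T | None => True end.

Definition in_dom (tau : option R) (t : R) : Prop :=
  0 <= t /\ match tau with Some T => t < T | None => True end.

(* f has derivative f' at every point of D, relative to D
   (one-sided at the endpoint 0 of [0,tau)). *)
Definition has_deriv_on (D : R -> Prop) (f f' : R -> R) : Prop :=
  forall t, D t -> forall eps, 0 < eps -> exists delta, 0 < delta /\
    forall s, D s -> Rabs (s - t) < delta ->
      Rabs (f s - f t - f' t * (s - t)) <= eps * Rabs (s - t).

Definition cont_on (D : R -> Prop) (f : R -> R) : Prop :=
  forall t, D t -> forall eps, 0 < eps -> exists delta, 0 < delta /\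
    forall s, D s -> Rabs (s - t) < delta -> Rabs (f s - f t) < eps.

(* A fixed norm on R^2 (max norm); the shadowing property is norm-independent. *)
Definition norm2 (v : R * R) : R := Rmax (Rabs (fst v)) (Rabs (snd v)).
Definition sub2 (u v : R * R) : R * R := (fst u - fst v, snd u - snd v).

Definition C1_with_deriv (tau : option R) (y y' : R -> R * R) : Prop :=
  has_deriv_on (in_dom tau) (fun t => fst (y t)) (fun t => fst (y' t)) /\
  has_deriv_on (in_dom tau) (fun t => snd (y t)) (fun t => snd (y' t)) /\
  cont_on (in_dom tau) (fun t => fst (y' t)) /\
  cont_on (in_dom tau) (fun t => snd (y' t)).

Definition pseudosolution_le (g : R -> R * R -> R * R) (tau : option R)
    (y : R -> R * R) (eps : R) : Prop :=
  exists y' : R -> R * R, C1_with_deriv tau y y' /\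
    forall t, in_dom tau t -> norm2 (sub2 (y' t) (g t (y t))) <= eps.

Definition is_solution (g : R -> R * R -> R * R) (tau : option R)
    (x : R -> R * R) : Prop :=
  has_deriv_on (in_dom tau) (fun t => fst (x t)) (fun t => fst (g t (x t))) /\
  has_deriv_on (in_dom tau) (fun t => snd (x t)) (fun t => snd (g t (x t))).

Definition cond_lip_shadowing (g : R -> R * R -> R * R) (H : R * R -> Prop) : Prop :=
  exists eps0 kappa, 0 < eps0 /\ 0 < kappa /\
    forall eps, 0 < eps -> eps <= eps0 ->
    forall (tau : option R) (y : R -> R * R),
      horizon_pos tau ->
      pseudosolution_le g tau y eps ->
      (forall t, in_dom tau t -> H (y t)) ->
      exists x : R -> R * R, is_solution g tau x /\
        forall t, in_dom tau t -> norm2 (sub2 (x t) (y t)) <= kappa * eps.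

Definition sir_field (t : R) (p : R * R) : R * R :=
  let S := fst p in let I := snd p in (1 - I * S - S, I * S - I).

Definition Gamma (c : R) (p : R * R) : Prop :=
  0 <= fst p /\ 0 <= snd p /\ fst p + snd p <= 1 - c.

From Stdlib Require Import Reals Lra.
From Coquelicot Require Import Coquelicot.
Open Scope R_scope.

(* The total mass N = S + I obeys the linear equation N' = 1 - N,
   and then I obeys the Bernoulli equation I' = I (N - 1 - I); both are solved in
   closed form (mass_sol, infected_sol).  Given a pseudosolution y in Gamma_c, we
   shadow it by the exact solution with the same initial value.  The errors in N
   and in I satisfy linear differential inequalities d' = k d + O(eps) with a
   contracting coefficient k <= -1 for N and k <= -c for I (this is where c > 0
   is used), so a barrier argument keeps them below 3 eps and 5 eps / c.

   The constant map (1 - r, r) lies in Gamma_0 and is a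
   pseudosolution with residual r^2.  Any solution staying within r/8 of it has
   I' <= -r^2/2, so I drops by r/2 on [0, 1/r]: impossible.  Taking r small
   compared to 1/kappa contradicts the bound kappa r^2. *)

Lemma in_dom_0 tau : horizon_pos tau -> in_dom tau 0.
Proof. destruct tau; simpl; intros; split; lra. Qed.

Lemma in_dom_le tau t s : in_dom tau t -> 0 <= s <= t -> in_dom tau s.
Proof. destruct tau; simpl; intros [? ?] ?; split; lra. Qed.

Lemma norm2_le v e : norm2 v <= e <-> Rabs (fst v) <= e /\ Rabs (snd v) <= e.
Proof.
unfold norm2; split.
- intros H; split; eapply Rle_trans; [apply Rmax_l | exact H | apply Rmax_r | exact H].
- intros [H1 H2]; apply Rmax_lub; assumption.
Qed.

Lemma deriv_cont D f f' : has_deriv_on D f f' -> cont_on D f.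
Proof.
intros Hd t Dt e He.
destruct (Hd t Dt 1 Rlt_0_1) as [d [Hd0 Happrox]].
set (A := Rabs (f' t)).
assert (HA : 0 <= A) by apply Rabs_pos.
exists (Rmin d (e / (A + 2))); split.
{ apply Rmin_glb_lt; [lra | apply Rdiv_lt_0_compat; lra]. }
intros s Ds Hs.
pose proof (Rmin_l d (e / (A + 2))) as Hmin1.
pose proof (Rmin_r d (e / (A + 2))) as Hmin2.
specialize (Happrox s Ds ltac:(lra)).
assert (Hsmall : Rabs (s - t) * (A + 2) < e).
{ apply (Rmult_lt_compat_r (A + 2)) in Hs; [|lra].
  eapply Rlt_le_trans; [exact Hs|].
  apply Rle_trans with (e / (A + 2) * (A + 2)); [apply Rmult_le_compat_r; lra|].
  right; field; lra. }
assert (Htri : Rabs (f s - f t) <= Rabs (f s - f t - f' t * (s - t)) + A * Rabs (s - t)).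
{ unfold A; rewrite <- Rabs_mult.
  replace (f s - f t) with ((f s - f t - f' t * (s - t)) + f' t * (s - t)) at 1 by ring.
  apply Rabs_triang. }
pose proof (Rabs_pos (s - t)); nra.
Qed.

Lemma first_crossing tau h b t1 :
  cont_on (in_dom tau) h -> h 0 < b -> in_dom tau t1 -> b <= h t1 ->
  exists s0, 0 < s0 <= t1 /\ b <= h s0 /\ (forall u, 0 <= u < s0 -> h u < b).
Proof.
intros Hc H0 Ht1 Hb.
assert (Ht10 : 0 <= t1) by apply Ht1.
set (E := fun s => 0 <= s <= t1 /\ forall u, 0 <= u <= s -> h u < b).
assert (E0 : E 0).
{ split; [lra|]. intros u Hu. replace u with 0 by lra. exact H0. }
destruct (completeness E) as [s0 [Hub Hlub]].
{ exists t1. intros s Es; apply Es. }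
{ exists 0; exact E0. }
assert (Hs00 : 0 <= s0) by (apply Hub, E0).
assert (Hs0t : s0 <= t1) by (apply Hlub; intros s Es; apply Es).
assert (Hbelow : forall u, 0 <= u < s0 -> h u < b).
{ intros u Hu. destruct (Rlt_or_le (h u) b) as [|Hhu]; [assumption|].
  assert (Hup : is_upper_bound E u).
  { intros s [Hs Hall]. destruct (Rlt_or_le s u) as [|Hus]; [lra|].
    specialize (Hall u ltac:(lra)); lra. }
  specialize (Hlub u Hup); lra. }
assert (Hs0b : b <= h s0).
{ destruct (Rlt_or_le (h s0) b) as [Hlt|]; [exfalso|assumption].
  assert (Hs0t' : s0 < t1) by (destruct (Req_dec s0 t1); [subst; lra | lra]).
  destruct (Hc s0 (in_dom_le tau t1 s0 Ht1 ltac:(lra)) (b - h s0) ltac:(lra))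
    as [d [Hd0 Hnear]].
  set (s' := Rmin (s0 + d / 2) t1).
  assert (Hs'1 : s0 < s') by (apply Rmin_glb_lt; lra).
  assert (Hs'2 : s' <= s0 + d / 2) by apply Rmin_l.
  assert (Hs'3 : s' <= t1) by apply Rmin_r.
  assert (Es' : E s').
  { split; [lra|]. intros u Hu.
    destruct (Rlt_or_le u s0); [apply Hbelow; lra|].
    assert (Hdist : Rabs (u - s0) < d) by (apply Rabs_lt_between; lra).
    specialize (Hnear u (in_dom_le tau t1 u Ht1 ltac:(lra)) Hdist).
    apply Rabs_lt_between in Hnear; lra. }
  specialize (Hub s' Es'); lra. }
exists s0; split; [|split; assumption].
split; [|assumption].
destruct (Req_dec s0 0) as [->|]; lra.
Qed.

Lemma cont_const D a : cont_on D (fun _ => a).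
Proof.
intros t _ e He. exists 1; split; [lra|]. intros s _ _.
replace (a - a) with 0 by ring. rewrite Rabs_R0; lra.
Qed.

Lemma hd_const D a : has_deriv_on D (fun _ => a) (fun _ => 0).
Proof.
intros t _ e He. exists 1; split; [lra|]. intros s _ _.
replace (a - a - 0 * (s - t)) with 0 by ring. rewrite Rabs_R0.
pose proof (Rabs_pos (s - t)); nra.
Qed.

Lemma hd_id D : has_deriv_on D (fun t => t) (fun _ => 1).
Proof.
intros t _ e He. exists 1; split; [lra|]. intros s _ _.
replace (s - t - 1 * (s - t)) with 0 by ring. rewrite Rabs_R0.
pose proof (Rabs_pos (s - t)); nra.
Qed.

Lemma hd_plus D f f' g g' : has_deriv_on D f f' -> has_deriv_on D g g' ->
  has_deriv_on D (fun t => f t + g t) (fun t => f' t + g' t).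
Proof.
intros Hf Hg t Dt e He.
destruct (Hf t Dt (e / 2)) as [d1 [Hd1 H1]]; [lra|].
destruct (Hg t Dt (e / 2)) as [d2 [Hd2 H2]]; [lra|].
exists (Rmin d1 d2); split; [apply Rmin_glb_lt; assumption|].
intros s Ds Hs.
specialize (H1 s Ds (Rlt_le_trans _ _ _ Hs (Rmin_l _ _))).
specialize (H2 s Ds (Rlt_le_trans _ _ _ Hs (Rmin_r _ _))).
replace (f s + g s - (f t + g t) - (f' t + g' t) * (s - t)) with
  ((f s - f t - f' t * (s - t)) + (g s - g t - g' t * (s - t))) by ring.
eapply Rle_trans; [apply Rabs_triang | lra].
Qed.

Lemma hd_scal D f f' a : has_deriv_on D f f' ->
  has_deriv_on D (fun t => a * f t) (fun t => a * f' t).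
Proof.
intros Hf t Dt e He.
assert (Ha : 0 <= Rabs a) by apply Rabs_pos.
destruct (Hf t Dt (e / (Rabs a + 1))) as [d [Hd H1]].
{ apply Rdiv_lt_0_compat; lra. }
exists d; split; [assumption|]. intros s Ds Hs. specialize (H1 s Ds Hs).
replace (a * f s - a * f t - a * f' t * (s - t)) with (a * (f s - f t - f' t * (s - t)))
  by ring.
rewrite Rabs_mult.
assert (Hq : e / (Rabs a + 1) * (Rabs a + 1) = e) by (field; lra).
assert (0 <= e / (Rabs a + 1)) by (apply Rlt_le, Rdiv_lt_0_compat; lra).
pose proof (Rabs_pos (s - t)).
pose proof (Rabs_pos (f s - f t - f' t * (s - t))).
nra.
Qed.

Lemma hd_minus D f f' g g' : has_deriv_on D f f' -> has_deriv_on D g g' ->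
  has_deriv_on D (fun t => f t - g t) (fun t => f' t - g' t).
Proof.
intros Hf Hg t Dt e He.
destruct (hd_plus D f f' _ _ Hf (hd_scal D g g' (-1) Hg) t Dt e He) as [d [Hd Happrox]].
exists d; split; [assumption|]. intros s Ds Hs.
replace (f s - g s - (f t - g t) - (f' t - g' t) * (s - t)) with
  (f s + -1 * g s - (f t + -1 * g t) - (f' t + -1 * g' t) * (s - t)) by ring.
exact (Happrox s Ds Hs).
Qed.

Lemma is_derive_hd (D : R -> Prop) f f' :
  (forall t, D t -> is_derive f t (f' t)) -> has_deriv_on D f f'.
Proof.
intros H t Dt e He.
destruct (proj1 (is_derive_Reals f t (f' t)) (H t Dt) e He) as [delta Hdelta].
exists delta; split; [apply cond_pos|].
intros s _ Hs.
destruct (Req_dec s t) as [->|Hst].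
{ replace (f t - f t - f' t * (t - t)) with 0 by ring. rewrite Rabs_R0.
  pose proof (Rabs_pos (t - t)); nra. }
specialize (Hdelta (s - t) ltac:(lra) Hs).
replace (t + (s - t)) with s in Hdelta by ring.
replace (f s - f t - f' t * (s - t)) with ((s - t) * ((f s - f t) / (s - t) - f' t))
  by (field; lra).
rewrite Rabs_mult, Rmult_comm.
apply Rmult_le_compat_r; [apply Rabs_pos | lra].
Qed.

(* Barrier principle: if h starts below b and h' < 0 whenever h >= b, then h
   never reaches b.  At the first crossing time the left difference quotient
   would be nonnegative. *)
Lemma barrier_upper tau h h' b : has_deriv_on (in_dom tau) h h' -> h 0 < b ->
  (forall t, in_dom tau t -> b <= h t -> h' t < 0) ->
  forall t, in_dom tau t -> h t < b.
Proof.
intros Hd H0 Hneg t1 Ht1.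
destruct (Rlt_or_le (h t1) b) as [|Hb]; [assumption|exfalso].
destruct (first_crossing tau h b t1 (deriv_cont _ _ _ Hd) H0 Ht1 Hb)
  as [s0 [[Hs0 Hs0t] [Hbs0 Hbelow]]].
assert (Ds0 : in_dom tau s0) by (apply (in_dom_le tau t1); [assumption | lra]).
specialize (Hneg s0 Ds0 Hbs0).
destruct (Hd s0 Ds0 (- h' s0 / 2) ltac:(lra)) as [delta [Hdelta Happrox]].
set (k := Rmin delta s0 / 2).
assert (Hk0 : 0 < k) by (assert (0 < Rmin delta s0) by (apply Rmin_glb_lt; lra); unfold k; lra).
assert (Hk1 : k < delta) by (pose proof (Rmin_l delta s0); unfold k; lra).
assert (Hk2 : k <= s0 / 2) by (pose proof (Rmin_r delta s0); unfold k; lra).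
assert (Hdist : Rabs (s0 - k - s0) = k).
{ replace (s0 - k - s0) with (- k) by ring. rewrite Rabs_Ropp. apply Rabs_pos_eq; lra. }
specialize (Happrox (s0 - k) (in_dom_le tau s0 (s0 - k) Ds0 ltac:(lra)) ltac:(rewrite Hdist; lra)).
rewrite Hdist in Happrox. apply Rabs_le_between in Happrox.
assert (h (s0 - k) < b) by (apply Hbelow; lra).
nra.
Qed.

Lemma linear_barrier tau d d' k a beta b :
  has_deriv_on (in_dom tau) d d' -> Rabs (d 0) < b -> 0 < a -> beta < a * b ->
  (forall t, in_dom tau t -> k t <= - a) ->
  (forall t, in_dom tau t -> Rabs (d' t - k t * d t) <= beta) ->
  forall t, in_dom tau t -> Rabs (d t) < b.
Proof.
intros Hd H0 Ha Hab Hk Hres t Ht.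
apply Rabs_lt_between in H0.
apply Rabs_lt_between; split.
- assert (Hopp : -1 * d t < b).
  { apply (barrier_upper tau _ (fun s => -1 * d' s) b (hd_scal _ _ _ (-1) Hd));
      [lra | | assumption].
    intros s Hs Hds. specialize (Hk s Hs). specialize (Hres s Hs).
    apply Rabs_le_between in Hres.
    assert (a * b <= k s * d s) by nra. lra. }
  lra.
- apply (barrier_upper tau d d' b Hd); [lra | | assumption].
  intros s Hs Hds. specialize (Hk s Hs). specialize (Hres s Hs).
  apply Rabs_le_between in Hres.
  assert (k s * d s <= - (a * b)) by nra. lra.
Qed.

Lemma decrease_bound tau h h' m : has_deriv_on (in_dom tau) h h' ->
  (forall t, in_dom tau t -> h' t < - m) ->
  forall t, in_dom tau t -> h t <= h 0 - m * t.
Proof.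
intros Hd Hneg t Ht.
pose proof (hd_plus _ _ _ _ _ Hd (hd_scal _ _ _ m (hd_id (in_dom tau)))) as Hg.
apply Rle_plus_epsilon; intros delta Hdelta.
assert (Hlt : h t + m * t < h 0 + m * 0 + delta).
{ apply (barrier_upper tau _ _ _ Hg); [lra | | exact Ht].
  intros s Hs _. specialize (Hneg s Hs); lra. }
lra.
Qed.

Lemma exp_le_compat x y : x <= y -> exp x <= exp y.
Proof. intros [H | ->]; [left; apply exp_increasing; exact H | right; reflexivity]. Qed.

(* Explicit solution: total mass N(t) = S + I, solving N' = 1 - N, N(0) = N0. *)
Definition mass_sol (N0 t : R) : R := 1 + (N0 - 1) * exp (- t).

(* Integrating factor for the Bernoulli equation: weight' = (N - 1) weight. *)
Definition weight (N0 t : R) : R := exp ((N0 - 1) * (1 - exp (- t))).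

(* Infected component, solving I' = I (N - 1 - I), I(0) = I0. *)
Definition infected_sol (N0 I0 t : R) : R :=
  I0 * weight N0 t / (1 + I0 * RInt (weight N0) 0 t).

Definition sir_sol (N0 I0 t : R) : R * R :=
  (mass_sol N0 t - infected_sol N0 I0 t, infected_sol N0 I0 t).

Lemma mass_sol_derive N0 t : is_derive (mass_sol N0) t (1 - mass_sol N0 t).
Proof. unfold mass_sol. auto_derive; [exact I | ring]. Qed.

Lemma mass_sol_0 N0 : mass_sol N0 0 = N0.
Proof. unfold mass_sol. rewrite Ropp_0, exp_0. ring. Qed.

Lemma weight_derive N0 t :
  is_derive (weight N0) t ((mass_sol N0 t - 1) * weight N0 t).
Proof.
unfold weight, mass_sol. auto_derive; [exact I|].
replace (1 + - exp (- t)) with (1 - exp (- t)) by ring. ring.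
Qed.

Lemma weight_continuous N0 t : continuous (weight N0) t.
Proof.
apply (@ex_derive_continuous R_AbsRing R_NormedModule).
eexists; apply weight_derive.
Qed.

Lemma weight_bounds N0 t : N0 <= 1 -> 0 <= t -> 0 < weight N0 t <= 1.
Proof.
intros HN Ht. split; [apply exp_pos|].
rewrite <- exp_0. apply exp_le_compat.
assert (exp (- t) <= 1) by (rewrite <- exp_0; apply exp_le_compat; lra).
pose proof (exp_pos (- t)). nra.
Qed.

Lemma weight_integrable N0 a b : ex_RInt (weight N0) a b.
Proof.
apply (@ex_RInt_continuous R_CompleteNormedModule).
intros; apply weight_continuous.
Qed.

Lemma weight_integral_derive N0 t :
  is_derive (fun s => RInt (weight N0) 0 s) t (weight N0 t).
Proof.
apply is_derive_RInt with (a := 0); [|apply weight_continuous].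
apply filter_forall; intros b. apply RInt_correct, weight_integrable.
Qed.

Lemma weight_integral_nonneg N0 t : 0 <= t -> 0 <= RInt (weight N0) 0 t.
Proof.
intros Ht. apply RInt_ge_0; [exact Ht | apply weight_integrable |].
intros; left; apply exp_pos.
Qed.

Lemma infected_sol_0 N0 I0 : infected_sol N0 I0 0 = I0.
Proof.
unfold infected_sol, weight. rewrite RInt_point, Ropp_0, exp_0.
unfold zero; simpl. rewrite Rminus_diag, Rmult_0_r, exp_0. field.
Qed.

(* infected_sol solves the Bernoulli equation; the denominator stays >= 1. *)
Lemma infected_sol_derive N0 I0 t : 0 <= I0 -> 0 <= t ->
  is_derive (infected_sol N0 I0) t
    (infected_sol N0 I0 t * (mass_sol N0 t - 1 - infected_sol N0 I0 t)).
Proof.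
intros HI Ht.
pose proof (weight_integral_nonneg N0 t Ht) as Hint.
assert (Hden : 1 + I0 * RInt (weight N0) 0 t <> 0) by nra.
unfold infected_sol.
evar (l : R).
assert (Hd : is_derive (fun s => I0 * weight N0 s / (1 + I0 * RInt (weight N0) 0 s)) t l).
{ apply is_derive_div; [| |exact Hden].
  - apply (is_derive_scal (weight N0)), weight_derive.
  - apply @is_derive_plus; [apply is_derive_const|].
    apply (is_derive_scal (fun b => RInt (weight N0) 0 b)), weight_integral_derive. }
replace (_ * _) with l; [exact Hd|].
subst l; simpl. rewrite plus_zero_l. field; exact Hden.
Qed.

Lemma infected_sol_bounds N0 I0 t : 0 <= I0 -> N0 <= 1 -> 0 <= t ->
  0 <= infected_sol N0 I0 t <= I0.
Proof.
intros HI HN Ht. unfold infected_sol.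
pose proof (weight_integral_nonneg N0 t Ht) as Hint.
pose proof (weight_bounds N0 t HN Ht) as Hw.
assert (Hden : 1 <= 1 + I0 * RInt (weight N0) 0 t) by nra.
split.
- apply Rle_mult_inv_pos; nra.
- apply (Rmult_le_reg_r (1 + I0 * RInt (weight N0) 0 t)); [lra|].
  unfold Rdiv. rewrite Rmult_assoc, Rinv_l by lra. nra.
Qed.

Lemma sir_sol_solution N0 I0 tau : 0 <= I0 -> is_solution sir_field tau (sir_sol N0 I0).
Proof.
intros HI. split; apply is_derive_hd; intros t [Ht _];
  pose proof (infected_sol_derive N0 I0 t HI Ht) as HdI;
  unfold sir_sol, sir_field; simpl.
- pose proof (@is_derive_minus R_AbsRing R_NormedModule _ _ t _ _ (mass_sol_derive N0 t) HdI)
    as Hd.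
  replace (_ - _ - _) with (minus (1 - mass_sol N0 t)
    (infected_sol N0 I0 t * (mass_sol N0 t - 1 - infected_sol N0 I0 t))); [exact Hd|].
  unfold minus, plus, opp; simpl. ring.
- replace (_ - _) with (infected_sol N0 I0 t * (mass_sol N0 t - 1 - infected_sol N0 I0 t))
    by ring.
  exact HdI.
Qed.

Section PositivePart.

Variables (c eps : R) (tau : option R) (y y' : R -> R * R).
Hypothesis c_pos : 0 < c.
Hypothesis eps_pos : 0 < eps.
Hypothesis tau_pos : horizon_pos tau.
Hypothesis y_S_deriv :
  has_deriv_on (in_dom tau) (fun t => fst (y t)) (fun t => fst (y' t)).
Hypothesis y_I_deriv :
  has_deriv_on (in_dom tau) (fun t => snd (y t)) (fun t => snd (y' t)).
Hypothesis y_residual :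
  forall t, in_dom tau t -> norm2 (sub2 (y' t) (sir_field t (y t))) <= eps.
Hypothesis y_in_Gamma : forall t, in_dom tau t -> Gamma c (y t).

Let N0 := fst (y 0) + snd (y 0).
Let I0 := snd (y 0).

Lemma residual_components t : in_dom tau t ->
  Rabs (fst (y' t) - (1 - snd (y t) * fst (y t) - fst (y t))) <= eps /\
  Rabs (snd (y' t) - (snd (y t) * fst (y t) - snd (y t))) <= eps.
Proof. intros Ht. exact (proj1 (norm2_le _ _) (y_residual t Ht)). Qed.

Lemma initial_bounds : 0 <= I0 <= 1 /\ N0 <= 1.
Proof.
destruct (y_in_Gamma 0 (in_dom_0 tau tau_pos)) as [HS [HI HN]].
unfold I0, N0; lra.
Qed.

(* The mass error d = N_y - N satisfies |d' + d| <= 2 eps. *)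
Lemma mass_error t : in_dom tau t ->
  Rabs (fst (y t) + snd (y t) - mass_sol N0 t) < 3 * eps.
Proof.
apply (linear_barrier tau _ _ (fun _ => -1) 1 (2 * eps) (3 * eps)
  (hd_minus _ _ _ _ _ (hd_plus _ _ _ _ _ y_S_deriv y_I_deriv)
    (is_derive_hd _ _ _ (fun s _ => mass_sol_derive N0 s)))); [| lra | lra | |].
- rewrite mass_sol_0. unfold N0. rewrite Rminus_diag, Rabs_R0. lra.
- intros; lra.
- intros s Hs. destruct (residual_components s Hs) as [H1 H2].
  apply Rabs_le_between in H1, H2. apply Rabs_le_between. lra.
Qed.

(* The infection error d = I_y - I satisfies d' = k d + e with
   k = S_y - 1 - I <= S_y + I_y - 1 <= -c and |e| <= eps + I |N_y - N| <= 4 eps. *)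
Lemma infected_error t : in_dom tau t ->
  Rabs (snd (y t) - infected_sol N0 I0 t) < 5 * eps / c.
Proof.
destruct initial_bounds as [[HI0 HI1] HN0].
assert (Hbound : forall s, in_dom tau s -> 0 <= infected_sol N0 I0 s <= 1).
{ intros s Hs. pose proof (infected_sol_bounds N0 I0 s HI0 HN0 (proj1 Hs)). lra. }
apply (linear_barrier tau _ _
  (fun s => fst (y s) - 1 - infected_sol N0 I0 s) c (4 * eps) (5 * eps / c)
  (hd_minus _ _ _ _ _ y_I_deriv
    (is_derive_hd _ _ _ (fun s Hs => infected_sol_derive N0 I0 s HI0 (proj1 Hs)))));
  [| exact c_pos | | |].
- rewrite infected_sol_0. unfold I0. rewrite Rminus_diag, Rabs_R0.
  apply Rdiv_lt_0_compat; lra.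
- replace (c * (5 * eps / c)) with (5 * eps) by (field; lra). lra.
- intros s Hs. destruct (y_in_Gamma s Hs) as [_ [HI HN]].
  pose proof (Hbound s Hs). lra.
- intros s Hs. destruct (residual_components s Hs) as [_ HresI].
  pose proof (mass_error s Hs) as HdN. pose proof (Hbound s Hs) as Hb.
  set (Sy := fst (y s)) in *. set (Iy := snd (y s)) in *.
  set (Ix := infected_sol N0 I0 s) in *. set (Nx := mass_sol N0 s) in *.
  replace (_ - _ * _) with ((snd (y' s) - (Iy * Sy - Iy)) + Ix * (Sy + Iy - Nx))
    by (unfold Sy, Iy; ring).
  apply Rabs_le_between in HresI. apply Rabs_lt_between in HdN.
  apply Rabs_le_between.
  assert (- (3 * eps) <= Ix * (Sy + Iy - Nx) <= 3 * eps) by (split; nra).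
  lra.
Qed.

Lemma sir_sol_shadows t : in_dom tau t ->
  norm2 (sub2 (sir_sol N0 I0 t) (y t)) <= (3 + 5 / c) * eps.
Proof.
intros Ht. pose proof (mass_error t Ht) as HN. pose proof (infected_error t Ht) as HI.
apply Rabs_lt_between in HN, HI.
replace ((3 + 5 / c) * eps) with (3 * eps + 5 * eps / c) by (field; lra).
assert (0 < 5 * eps / c) by (apply Rdiv_lt_0_compat; lra).
apply norm2_le; unfold sir_sol, sub2; simpl; split; apply Rabs_le_between; lra.
Qed.

End PositivePart.

Lemma positive_part c : 0 < c < 1 -> cond_lip_shadowing sir_field (Gamma c).
Proof.
intros Hc.
exists 1, (3 + 5 / c). split; [lra|]. split.
{ assert (0 < 5 / c) by (apply Rdiv_lt_0_compat; lra). lra. }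
intros eps Heps _ tau y Htau [y' [[HdS [HdI _]] Hres]] HG.
set (I0 := snd (y 0)).
assert (HI0 : 0 <= I0) by apply (HG 0 (in_dom_0 tau Htau)).
exists (sir_sol (fst (y 0) + I0) I0). split.
- apply sir_sol_solution; exact HI0.
- exact (sir_sol_shadows c eps tau y y' (proj1 Hc) Heps Htau HdS HdI Hres HG).
Qed.

Lemma constant_state_pseudosolution r :
  pseudosolution_le sir_field None (fun _ => (1 - r, r)) (r * r).
Proof.
exists (fun _ => (0, 0)). split.
- split; [|split; [|split]]; simpl; first [apply hd_const | apply cont_const].
- intros t _. apply norm2_le; unfold sub2, sir_field; simpl.
  split; apply Rabs_le_between; nra.
Qed.

(* No solution stays within r/8 of (1 - r, r) for all t >= 0: along it the
   infected component would decrease by r/2 over [0, 1/r]. *)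
Lemma constant_state_not_shadowed r x : 0 < r -> is_solution sir_field None x ->
  ~ (forall t, 0 <= t -> norm2 (sub2 (x t) (1 - r, r)) <= r / 8).
Proof.
intros Hr [_ HdI] Hclose.
assert (Hnear : forall t, 0 <= t ->
  Rabs (fst (x t) - (1 - r)) <= r / 8 /\ Rabs (snd (x t) - r) <= r / 8)
  by (intros t Ht; exact (proj1 (norm2_le _ _) (Hclose t Ht))).
assert (Hdecay : forall t, in_dom None t -> snd (sir_field t (x t)) < - (r * r / 2)).
{ intros t [Ht _]. destruct (Hnear t Ht) as [HS HI].
  apply Rabs_le_between in HS, HI. unfold sir_field; simpl.
  assert (Hprod : 7 * r / 8 * (7 * r / 8) <= snd (x t) * (1 - fst (x t)))
    by (apply Rmult_le_compat; lra).
  nra. }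
assert (HT : in_dom None (/ r)) by (split; [left; apply Rinv_0_lt_compat, Hr | exact I]).
pose proof (decrease_bound None _ _ _ HdI Hdecay (/ r) HT) as Hdrop.
replace (r * r / 2 * / r) with (r / 2) in Hdrop by (field; lra).
destruct (Hnear 0 ltac:(lra)) as [_ H0]. destruct (Hnear (/ r) (proj1 HT)) as [_ HT'].
apply Rabs_le_between in H0, HT'. lra.
Qed.

(* Failure of Lipschitz shadowing in Gamma_0: choose r <= 1/(8 kappa). *)
Lemma negative_part : ~ cond_lip_shadowing sir_field (Gamma 0).
Proof.
intros [eps0 [k [Heps0 [Hk Hshadow]]]].
set (r := Rmin 1 (Rmin eps0 (/ (8 * k)))).
assert (Hr1 : r <= 1) by apply Rmin_l.
assert (Hr2 : r <= eps0) by (eapply Rle_trans; [apply Rmin_r | apply Rmin_l]).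
assert (Hr3 : r <= / (8 * k)) by (eapply Rle_trans; [apply Rmin_r | apply Rmin_r]).
assert (Hr0 : 0 < r).
{ apply Rmin_glb_lt; [lra|]. apply Rmin_glb_lt; [exact Heps0|].
  apply Rinv_0_lt_compat; lra. }
assert (Hkr : k * (r * r) <= r / 8).
{ apply (Rmult_le_compat_l (8 * k)) in Hr3; [|lra].
  rewrite Rinv_r in Hr3; nra. }
destruct (Hshadow (r * r) ltac:(nra) ltac:(nra) None (fun _ => (1 - r, r)) I
  (constant_state_pseudosolution r)) as [x [Hx Hclose]].
{ intros t _. unfold Gamma; simpl. lra. }
apply (constant_state_not_shadowed r x Hr0 Hx).
intros t Ht. eapply Rle_trans; [exact (Hclose t (conj Ht I)) | exact Hkr].
Qed.

Theorem mainTheorem12 :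
  (forall c : R, 0 < c < 1 -> cond_lip_shadowing sir_field (Gamma c)) /\
  ~ cond_lip_shadowing sir_field (Gamma 0).
Proof. split; [exact positive_part | exact negative_part]. Qed.
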